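(* Let $M$ be a separable finite MDP with $p_{\mathrm{maj}},p_{\mathrm{min}}>0$ and agent rewards $\rho$. Consider the linear program (LP) in variables $\lambda\in\mathbb{R}^{S\times A}$, $c\in\mathbb{R}$: maximize $(1-\gamma)^{-1}\sum_{s\in S}\sum_{a\in A}\lambda_{s,a}R_{s,a}$ subject to $\lambda_{s,a}\ge0$ for all $s,a$; $\sum_{a}\lambda_{s',a}=(1-\gamma)D_{s'}+\gamma\sum_{s}\sum_{a}\lambda_{s,a}P_{s,a,s'}$ for all $s'\in S$; $p_z^{-1}\sum_{\tilde s\in\tilde S}\sum_{a\in A}\lambda_{(z,\tilde s),a}\rho_{(z,\tilde s),a}=c$ for all $z\in Z$. Given an optimal solution $(\lambda^*,c^* )$, define $\pi^*_{s,a}=\lambda^*_{s,a}/\sum_{a'}\lambda^*_{s,a'}$ whenever $\sum_{a'}\lambda^*_{s,a'}>0$, and let $\pi^*_{s,\cdot}$ be an arbitrary probability distribution on $A$ otherwise. Then the LP is feasible if and only if $\Pi_{\mathrm{DP}}\neq\varnothing$; and in that case the LP has an optimal solution, and for every optimal solution $(\lambda^*,c^* )$ the policy $\pi^*$ is an optimal solution of problem (P), with $R^{(\pi^* )}$ equal to the optimal value of the LP.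
   Context: A finite MDP is $M=(S,A,D,P,R,\gamma)$ where $S,A$ are finite nonempty sets, $D$ is a probability distribution on $S$, $P_{s,a,s'}\ge 0$ with $\sum_{s'}P_{s,a,s'}=1$ for all $s,a$, $R\in\mathbb{R}^{S\times A}$, and $\gamma\in(0,1)$. A policy is $\pi\in\mathbb{R}^{S\times A}$ with $\pi_{s,a}\ge0$ and $\sum_a\pi_{s,a}=1$. Let $P^{(\pi)}_{s,s'}=\sum_a\pi_{s,a}P_{s,a,s'}$. For a distribution $\mu$ on $S$ set $\mu^{(\pi,0)}=\mu$, $\mu^{(\pi,t)}_{s'}=\sum_s\mu^{(\pi,t-1)}_sP^{(\pi)}_{s,s'}$, and $\mu^{(\pi)}=(1-\gamma)\sum_{t\ge0}\gamma^t\mu^{(\pi,t)}$. Write $D^{(\pi)}$ for $\mu=D$, $\Lambda^{(\pi)}_{s,a}=D^{(\pi)}_s\pi_{s,a}$, and $R^{(\pi)}=(1-\gamma)^{-1}\sum_{s,a}\Lambda^{(\pi)}_{s,a}R_{s,a}$. Fairness setup: $S=Z\times\tilde S$ with $Z=\{\mathrm{maj},\mathrm{min}\}$ and $\tilde S$ finite nonempty; agent rewards $\rho\in\mathbb{R}^{S\times A}$. For $z\in Z$, $p_z=\sum_{\tilde s}D_{(z,\tilde s)}$, $D_z$ is the distribution $(D_z)_s=D_s\cdot\mathbb{I}[s=(z,\tilde s)\text{ for some }\tilde s]/p_z$, $D_z^{(\pi)}$ is $\mu^{(\pi)}$ for $\mu=D_z$, $(\Lambda_z^{(\pi)})_{s,a}=(D_z^{(\pi)})_s\pi_{s,a}$,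 and $\rho_z^{(\pi)}=\sum_{s,a}(\Lambda_z^{(\pi)})_{s,a}\rho_{s,a}$. A policy satisfies demographic parity if $\rho_{\mathrm{maj}}^{(\pi)}=\rho_{\mathrm{min}}^{(\pi)}$; $\Pi_{\mathrm{DP}}$ is the set of such policies. Problem (P): maximize $R^{(\pi)}$ over $\pi\in\Pi_{\mathrm{DP}}$. The MDP is separable if there is a transition kernel $\tilde P$ on $\tilde S$ (i.e. $\tilde P_{\tilde s,a,\tilde s'}\ge0$, $\sum_{\tilde s'}\tilde P_{\tilde s,a,\tilde s'}=1$) such that $P_{(z,\tilde s),a,(z',\tilde s')}=\mathbb{I}[z=z']\,\tilde P_{\tilde s,a,\tilde s'}$ for all $z,z'\in Z$, $\tilde s,\tilde s'\in\tilde S$, $a\in A$. *)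

From mathcomp Require Import all_boot.
From Stdlib Require Import Reals ClassicalEpsilon.
Set Implicit Arguments. Unset Strict Implicit. Unset Printing Implicit Defensive.
Open Scope R_scope.

Definition sumR (T : finType) (F : T -> R) : R := \big[Rplus/0]_(i : T) F i.

(* The group set Z = {maj, min} is encoded as bool: maj = true, min = false. *)
Definition maj : bool := true.
Definition min : bool := false.

Section MDP.
Variables (St A : finType).
Definition S := (bool * St)%type.

Definition is_distr (T : finType) (d : T -> R) : Prop :=
  (forall x, 0 <= d x) /\ sumR d = 1.

Definition is_kernel (T : finType) (P : T -> A -> T -> R) : Prop :=
  forall s a, is_distr (P s a).

Definition is_policy (T : finType) (pi : T -> A -> R) : Prop :=
  forall s, is_distr (pi s).

Definition separable (P : S -> A -> S -> R) : Prop :=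
  exists Pt : St -> A -> St -> R, is_kernel Pt /\
    forall (z z' : bool) (s s' : St) (a : A),
      P (z, s) a (z', s') = if z == z' then Pt s a s' else 0.

Variables (P : S -> A -> S -> R) (gamma : R).

Definition Ppi (pi : S -> A -> R) (s s' : S) : R := sumR (fun a => pi s a * P s a s').

Fixpoint mu_t (mu : S -> R) (pi : S -> A -> R) (t : nat) : S -> R :=
  match t with
  | O => mu
  | Datatypes.S t' => fun s' => sumR (fun s => mu_t mu pi t' s * Ppi pi s s')
  end.

Definition occ (mu : S -> R) (pi : S -> A -> R) (s : S) : R :=
  epsilon (inhabits 0)
    (fun l => infinite_sum (fun t => (1 - gamma) * gamma ^ t * mu_t mu pi t s) l).

Variables (D : S -> R) (Rw rho : S -> A -> R).

Definition Lambda (pi : S -> A -> R) (s : S) (a : A) : R := occ D pi s * pi s a.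

Definition Rpi (pi : S -> A -> R) : R :=
  / (1 - gamma) * sumR (fun s => sumR (fun a => Lambda pi s a * Rw s a)).

Definition pz (z : bool) : R := sumR (fun st : St => D (z, st)).

Definition Dz (z : bool) (s : S) : R := if s.1 == z then D s / pz z else 0.

Definition rhoz (pi : S -> A -> R) (z : bool) : R :=
  sumR (fun s => sumR (fun a => occ (Dz z) pi s * pi s a * rho s a)).

Definition demographic_parity (pi : S -> A -> R) : Prop := rhoz pi maj = rhoz pi min.

Definition in_PiDP (pi : S -> A -> R) : Prop := is_policy pi /\ demographic_parity pi.

Definition optimal_P (pi : S -> A -> R) : Prop :=
  in_PiDP pi /\ forall pi', in_PiDP pi' -> Rpi pi' <= Rpi pi.

Definition LP_obj (lam : S -> A -> R) : R :=
  / (1 - gamma) * sumR (fun s => sumR (fun a => lam s a * Rw s a)).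

Definition LP_feasible (lam : S -> A -> R) (c : R) : Prop :=
  (forall s a, 0 <= lam s a) /\
  (forall s', sumR (fun a => lam s' a) =
              (1 - gamma) * D s' + gamma * sumR (fun s => sumR (fun a => lam s a * P s a s'))) /\
  (forall z : bool,
      / pz z * sumR (fun st : St => sumR (fun a => lam (z, st) a * rho (z, st) a)) = c).

Definition LP_optimal (lam : S -> A -> R) (c : R) : Prop :=
  LP_feasible lam c /\
  forall lam' c', LP_feasible lam' c' -> LP_obj lam' <= LP_obj lam.

Definition induced_policy (lam : S -> A -> R) (pi : S -> A -> R) : Prop :=
  is_policy pi /\
  forall s, 0 < sumR (fun a => lam s a) -> forall a, pi s a = lam s a / sumR (fun a' => lam s a').

End MDP.

(* The proof rests on the correspondence between stationary policies pi and
   their discounted state-action occupancy measures Lambda^(pi).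
   1. Occupancy measures.  The series defining mu^(pi) converges (its terms are
      dominated by a geometric series, because mu^(pi,t) keeps the total mass
      of mu), and mu^(pi) solves the flow equation d = (1-g) mu + g d P^(pi).
      This equation has a unique solution: P^(pi) is stochastic and g < 1, so
      its homogeneous version is an l1-contraction.
   2. Separability.  No transition crosses groups, so the occupancy started
      from D_z is the restriction of D^(pi) to group z divided by p_z.  Hence
      rho_z^(pi) is linear in Lambda^(pi) and demographic parity is exactly the
      fairness constraint of the LP.
   3. Correspondence.  Lambda^(pi) is LP-feasible for every pi in Pi_DP;
      conversely a feasible lam equals Lambda^(pi) for every policy pi induced
      by lam (uniqueness in 1), and such a pi lies in Pi_DP.  Objectives agree:
      R^(pi) = LP_obj (Lambda^(pi)).
   4. Existence.  Feasible points have total mass 1, so the feasible set is a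
      compact polytope on which the linear objective attains its maximum. *)

From Coquelicot Require Import Coquelicot.
From HB Require Import structures.
From mathcomp Require Import all_boot all_order all_algebra.
From mathcomp Require Import all_classical all_reals all_analysis.
From mathcomp Require Import Rstruct Rstruct_topology.
From Stdlib Require Import Reals Lra ClassicalEpsilon.
Open Scope R_scope.
Set Implicit Arguments. Unset Strict Implicit.

Lemma sumR_ge0 (T : finType) (F : T -> R) : (forall i, 0 <= F i) -> 0 <= sumR F.
Proof. by move=> H; apply: (big_ind (fun x => 0 <= x)) => // *; lra. Qed.

Lemma sumR_le (T : finType) (F G : T -> R) : (forall i, F i <= G i) -> sumR F <= sumR G.
Proof. by move=> H; apply: (big_ind2 (fun x y => x <= y)) => // *; lra. Qed.

Lemma sumR_ext (T : finType) (F G : T -> R) : (forall i, F i = G i) -> sumR F = sumR G.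
Proof. by move=> H; apply: eq_bigr => i _. Qed.

Lemma sumR_plus (T : finType) (F G : T -> R) : sumR (fun i => F i + G i) = sumR F + sumR G.
Proof. exact: big_split. Qed.

Lemma sumR_scal (T : finType) (c : R) (F : T -> R) : sumR (fun i => c * F i) = c * sumR F.
Proof. by rewrite /sumR big_distrr. Qed.

Lemma sumR_scalr (T : finType) (c : R) (F : T -> R) : sumR (fun i => F i * c) = sumR F * c.
Proof. by rewrite /sumR big_distrl. Qed.

Lemma sumR_swap (T U : finType) (F : T -> U -> R) :
  sumR (fun i => sumR (fun j => F i j)) = sumR (fun j => sumR (fun i => F i j)).
Proof. exact: exchange_big. Qed.

Lemma sumR0 (T : finType) : sumR (fun _ : T => 0) = 0.
Proof. by rewrite /sumR big1. Qed.

Lemma sumR_abs (T : finType) (F : T -> R) : Rabs (sumR F) <= sumR (fun i => Rabs (F i)).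
Proof.
apply: (big_ind2 (fun x y => Rabs x <= y)) => [|x1 x2 y1 y2 H1 H2|i _].
- by rewrite Rabs_R0; lra.
- by have := Rabs_triang x1 y1; lra.
- lra.
Qed.

Lemma sumR_term (T : finType) (F : T -> R) i : (forall j, 0 <= F j) -> F i <= sumR F.
Proof.
move=> H; rewrite /sumR (bigD1 i) //=.
have : 0 <= \big[Rplus/0]_(j | j != i) F j by apply: (big_ind (fun x => 0 <= x)) => // *; lra.
lra.
Qed.

Lemma sumR_eq0 (T : finType) (F : T -> R) : (forall i, 0 <= F i) -> sumR F = 0 -> forall i, F i = 0.
Proof. by move=> H H0 i; have := sumR_term i H; have := H i; lra. Qed.

Lemma sumR_pair (T U : finType) (F : T * U -> R) :
  sumR F = sumR (fun i => sumR (fun j => F (i, j))).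
Proof. by rewrite /sumR pair_big; apply: eq_bigr => -[i j]. Qed.

Lemma sumR_bool (F : bool -> R) : sumR F = F true + F false.
Proof. exact: big_bool. Qed.

Lemma sumR_indicator (T : finType) (G : T -> R) i0 :
  sumR (fun i => (if i == i0 then 1 else 0) * G i) = G i0.
Proof.
rewrite /sumR (bigD1 i0) //= eqxx big1 => [|i /negbTE ->]; lra.
Qed.

Lemma is_series_zero : is_series (fun _ : nat => 0) 0.
Proof.
have Hhalf : Rabs (/2) < 1 by rewrite Rabs_pos_eq; lra.
have := is_series_scal 0 _ _ (is_series_geom _ Hhalf).
by rewrite /scal /= /mult /= Rmult_0_l; apply: is_series_ext => n; rewrite Rmult_0_l.
Qed.

Lemma is_series_sumR (T : finType) (f : T -> nat -> R) (l : T -> R) :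
  (forall i, is_series (f i) (l i)) ->
  is_series (fun t => sumR (fun i => f i t)) (sumR l).
Proof.
move=> H; rewrite /sumR; elim: (index_enum T) => [|x r IH].
  by rewrite big_nil; apply: is_series_ext is_series_zero => n; rewrite big_nil.
rewrite big_cons; apply: is_series_ext (is_series_plus _ _ _ _ (H x) IH) => n.
by rewrite big_cons.
Qed.

Section Occupancy.
Variables (St A : finType) (P : S St -> A -> S St -> R) (gamma : R).
Hypothesis HP : is_kernel P.
Hypothesis Hg : 0 < gamma < 1.
Variable pi : S St -> A -> R.
Hypothesis Hpi : is_policy pi.

Lemma Ppi_ge0 s s' : 0 <= Ppi P pi s s'.
Proof.
apply: sumR_ge0 => a; have := (Hpi s).1 a; have := (HP s a).1 s'; nra.
Qed.

Lemma Ppi_sum1 s : sumR (fun s' => Ppi P pi s s') = 1.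
Proof.
rewrite /Ppi sumR_swap -(Hpi s).2; apply: sumR_ext => a.
by rewrite sumR_scal (HP s a).2 Rmult_1_r.
Qed.

Lemma mu_t_ge0 mu : (forall s, 0 <= mu s) -> forall t s, 0 <= mu_t P mu pi t s.
Proof.
move=> Hmu; elim=> [|t IH] s //=.
by apply: sumR_ge0 => s0; have := IH s0; have := Ppi_ge0 s0 s; nra.
Qed.

Lemma mu_t_mass mu t : sumR (mu_t P mu pi t) = sumR mu.
Proof.
elim: t => [|t IH] //=; rewrite sumR_swap -IH; apply: sumR_ext => s.
by rewrite sumR_scal Ppi_sum1 Rmult_1_r.
Qed.

Variable mu : S St -> R.
Hypothesis Hmu : forall s, 0 <= mu s.

(* The series (1-g) sum_t g^t mu^(pi,t)_s converges (geometric domination),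
   so [occ] is its actual sum. *)
Lemma occ_series s :
  is_series (fun t => (1 - gamma) * gamma ^ t * mu_t P mu pi t s) (occ P gamma mu pi s).
Proof.
have Hgeom : Rabs gamma < 1 by rewrite Rabs_pos_eq; lra.
have Hex : ex_series (fun t => (1 - gamma) * gamma ^ t * mu_t P mu pi t s).
  apply: (ex_series_le _ (fun t => ((1 - gamma) * sumR mu) * gamma ^ t)); last first.
    by eexists; exact: (is_series_scal _ _ _ (is_series_geom _ Hgeom)).
  move=> t; rewrite /norm /= /abs /=.
  have Hterm := mu_t_ge0 Hmu t s.
  have Hmass : mu_t P mu pi t s <= sumR mu.
    by rewrite -(mu_t_mass mu t); apply: sumR_term => x; exact: mu_t_ge0.
  have Hgt : 0 <= gamma ^ t by apply: pow_le; lra.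
  have Hw : 0 <= (1 - gamma) * gamma ^ t by apply: Rmult_le_pos; lra.
  rewrite Rabs_pos_eq; last exact: Rmult_le_pos.
  by have := Rmult_le_compat_l _ _ _ Hw Hmass; lra.
rewrite /occ; apply/is_series_Reals; apply: epsilon_spec.
by case: Hex => l Hl; exists l; apply/is_series_Reals.
Qed.

Lemma occ_ge0 s : 0 <= occ P gamma mu pi s.
Proof.
have HS := occ_series (s := s); rewrite -(is_series_unique _ _ HS).
have Hterm t : 0 <= (1 - gamma) * gamma ^ t * mu_t P mu pi t s.
  have := mu_t_ge0 Hmu t s; have : 0 <= gamma ^ t by apply: pow_le; lra.
  by move=> *; apply: Rmult_le_pos => //; apply: Rmult_le_pos => //; lra.
have := Series_le (fun _ => 0) _ (fun n => conj (Rle_refl 0) (Hterm n)) (ex_intro _ _ HS).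
by rewrite (is_series_unique _ _ is_series_zero).
Qed.

(* Flow equation: shifting the series by one step expresses mu^(pi) through itself. *)
Lemma occ_flow s' :
  occ P gamma mu pi s' =
  (1 - gamma) * mu s' + gamma * sumR (fun s => occ P gamma mu pi s * Ppi P pi s s').
Proof.
set a := fun t => (1 - gamma) * gamma ^ t * mu_t P mu pi t s'.
have Htail : is_series (fun k => a k.+1) (occ P gamma mu pi s' - a O).
  apply: is_series_incr_1; rewrite /plus /=.
  by rewrite /Rminus Rplus_assoc Rplus_opp_l Rplus_0_r; exact: occ_series.
have Hstep : is_series (fun k => a k.+1)
    (gamma * sumR (fun s => occ P gamma mu pi s * Ppi P pi s s')).
  apply: (is_series_ext (fun k => gamma * sumR (fun s =>
        Ppi P pi s s' * ((1 - gamma) * gamma ^ k * mu_t P mu pi k s)))).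
    by move=> k; rewrite /a /= -sumR_scal -sumR_scal; apply: sumR_ext => s; ring.
  apply: (is_series_scal gamma); apply: is_series_sumR => s.
  by rewrite Rmult_comm; apply: (is_series_scal (Ppi P pi s s')); exact: occ_series.
by have := is_series_unique _ _ Htail; rewrite (is_series_unique _ _ Hstep) /a /=; lra.
Qed.

End Occupancy.

Section FlowUniqueness.
Variables (St A : finType) (P : S St -> A -> S St -> R) (gamma : R).
Hypothesis HP : is_kernel P.
Hypothesis Hg : 0 < gamma < 1.
Variable pi : S St -> A -> R.
Hypothesis Hpi : is_policy pi.

(* The map e |-> g e P^(pi) shrinks the l1-norm by the factor g < 1,
   so its only fixed point is 0. *)
Lemma flow_homogeneous_zero (e : S St -> R) :
  (forall s', e s' = gamma * sumR (fun s => e s * Ppi P pi s s')) -> forall s, e s = 0.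
Proof.
move=> He.
have Hpoint s' : Rabs (e s') <= gamma * sumR (fun s => Rabs (e s) * Ppi P pi s s').
  rewrite He Rabs_mult (Rabs_pos_eq gamma); last lra.
  apply: Rmult_le_compat_l; first lra.
  apply: Rle_trans (sumR_abs _) _; apply: sumR_le => s.
  by rewrite Rabs_mult (Rabs_pos_eq (Ppi _ _ _ _)); [lra | exact: Ppi_ge0].
have Hnorm : sumR (fun s => Rabs (e s)) <= gamma * sumR (fun s => Rabs (e s)).
  apply: Rle_trans (sumR_le Hpoint) _.
  rewrite sumR_scal sumR_swap; apply: Req_le; congr (_ * _); apply: sumR_ext => s.
  by rewrite sumR_scal Ppi_sum1 // Rmult_1_r.
have Hnn : 0 <= sumR (fun s => Rabs (e s)) by apply: sumR_ge0 => s; exact: Rabs_pos.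
have Hz : sumR (fun s => Rabs (e s)) = 0 by nra.
by move=> s; apply/Rabs_eq_0; exact: (sumR_eq0 (fun s => Rabs_pos (e s)) Hz).
Qed.

Lemma flow_unique mu (d1 d2 : S St -> R) :
  (forall s', d1 s' = (1 - gamma) * mu s' + gamma * sumR (fun s => d1 s * Ppi P pi s s')) ->
  (forall s', d2 s' = (1 - gamma) * mu s' + gamma * sumR (fun s => d2 s * Ppi P pi s s')) ->
  forall s, d1 s = d2 s.
Proof.
move=> H1 H2 s; suff : d1 s - d2 s = 0 by lra.
move: s; apply: (flow_homogeneous_zero (e := fun s => d1 s - d2 s)) => s'.
have -> : sumR (fun s => (d1 s - d2 s) * Ppi P pi s s') =
    sumR (fun s => d1 s * Ppi P pi s s') + - 1 * sumR (fun s => d2 s * Ppi P pi s s').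
  by rewrite -sumR_scal -sumR_plus; apply: sumR_ext => s0; ring.
rewrite H1 H2; ring.
Qed.

End FlowUniqueness.

Section PolicyLP.
Variables (St A : finType) (D : S St -> R) (P : S St -> A -> S St -> R)
  (Rw : S St -> A -> R) (gamma : R) (rho : S St -> A -> R).
Hypothesis HD : is_distr D.
Hypothesis HP : is_kernel P.
Hypothesis Hg : 0 < gamma < 1.

Lemma Lambda_flow pi : is_policy pi -> forall s',
  sumR (fun a => Lambda P gamma D pi s' a) =
  (1 - gamma) * D s' + gamma * sumR (fun s => sumR (fun a => Lambda P gamma D pi s a * P s a s')).
Proof.
move=> Hpi s'; rewrite /Lambda sumR_scal (Hpi s').2 Rmult_1_r.
rewrite {1}(occ_flow HP Hg Hpi HD.1 s'); congr (_ + _ * _).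
by apply: sumR_ext => s; rewrite /Ppi -sumR_scal; apply: sumR_ext => a; ring.
Qed.

(* A nonnegative lam solving the flow constraints is the occupancy measure of
   any policy it induces: lam factors as (sum_a lam) * pi, and sum_a lam solves
   the flow equation of pi, whose unique solution is D^(pi). *)
Lemma Lambda_induced lam pi :
  (forall s a, 0 <= lam s a) ->
  (forall s', sumR (fun a => lam s' a) =
     (1 - gamma) * D s' + gamma * sumR (fun s => sumR (fun a => lam s a * P s a s'))) ->
  induced_policy lam pi -> forall s a, Lambda P gamma D pi s a = lam s a.
Proof.
move=> Hnn Hflow [Hpi Hind].
pose d s := sumR (fun a => lam s a).
have Hfactor s a : lam s a = d s * pi s a.
  have Hd0 : 0 <= d s by apply: sumR_ge0 => a'; exact: Hnn.
  case: (Rle_lt_or_eq_dec 0 (d s) Hd0) => Hd.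
    by rewrite (Hind s Hd a) /d; field; rewrite /d in Hd; lra.
  by rewrite (sumR_eq0 (Hnn s) (esym Hd) a) -Hd; ring.
have Hdflow s' : d s' = (1 - gamma) * D s' + gamma * sumR (fun s => d s * Ppi P pi s s').
  rewrite /d Hflow; congr (_ + _ * _).
  apply: sumR_ext => s; rewrite /Ppi -sumR_scal; apply: sumR_ext => a.
  by rewrite Hfactor /d; ring.
have Hocc : forall s, occ P gamma D pi s = d s.
  exact: (flow_unique HP Hg Hpi (occ_flow HP Hg Hpi HD.1) Hdflow).
by move=> s a; rewrite /Lambda Hocc Hfactor.
Qed.

Lemma Rpi_LP_obj lam pi : (forall s a, Lambda P gamma D pi s a = lam s a) ->
  Rpi P gamma D Rw pi = LP_obj gamma Rw lam.
Proof.
move=> HL; rewrite /Rpi /LP_obj; congr (_ * _).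
by apply: sumR_ext => s; apply: sumR_ext => a; rewrite HL.
Qed.

(* Induced policies exist: normalise where the mass is positive, and use a
   point mass on a fixed action elsewhere. *)
Lemma induced_policy_exists (lam : S St -> A -> R) : inhabited A -> (forall s a, 0 <= lam s a) ->
  exists pi, induced_policy lam pi.
Proof.
case=> a0 Hnn.
exists (fun s a => if Rlt_dec 0 (sumR (lam s)) then lam s a / sumR (lam s)
                  else if a == a0 then 1 else 0).
split=> [s|s Hs a]; last by case: Rlt_dec.
split.
  move=> a; case: Rlt_dec => H; last by case: ifP => _; lra.
  by apply: Rmult_le_pos; [exact: Hnn | apply: Rlt_le; exact: Rinv_0_lt_compat].
case: Rlt_dec => H; first by rewrite /Rdiv sumR_scalr; field; lra.
by rewrite -[RHS](sumR_indicator (fun _ : A => 1) a0); apply: sumR_ext => a; rewrite Rmult_1_r.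
Qed.

(* Feasible points are probability distributions on S x A: summing the flow
   constraints over s' gives X = (1-g) + g X. *)
Lemma LP_feasible_mass lam c : LP_feasible P gamma D rho lam c ->
  sumR (fun s => sumR (fun a => lam s a)) = 1.
Proof.
move=> [Hnn [Hflow _]].
set X := sumR (fun s => sumR (fun a => lam s a)).
have HX : X = (1 - gamma) * 1 + gamma * X.
  rewrite {1}/X (sumR_ext Hflow) sumR_plus sumR_scal HD.2 sumR_scal.
  congr (_ + _ * _); rewrite sumR_swap /X; apply: sumR_ext => s.
  rewrite sumR_swap; apply: sumR_ext => a.
  by rewrite sumR_scal (HP s a).2 Rmult_1_r.
by apply: (Rmult_eq_reg_l (1 - gamma)); lra.
Qed.

Lemma LP_feasible_le1 lam c : LP_feasible P gamma D rho lam c -> forall s a, lam s a <= 1.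
Proof.
move=> H s a; have Hnn := H.1; rewrite -(LP_feasible_mass H).
apply: (Rle_trans _ (sumR (fun a => lam s a))); first exact: sumR_term.
apply: (sumR_term (F := fun s => sumR (fun a => lam s a))) => s'.
by apply: sumR_ge0 => *; exact: Hnn.
Qed.

Hypothesis Hsep : separable P.
Hypothesis Hpmaj : 0 < pz D maj.
Hypothesis Hpmin : 0 < pz D min.

Lemma pz_pos z : 0 < pz D z.
Proof. by case: z. Qed.

Lemma Ppi_cross_group pi s s' : s.1 != s'.1 -> Ppi P pi s s' = 0.
Proof.
case: Hsep => Pt [_ HPt]; case: s => z x; case: s' => z' y /= Hz.
rewrite /Ppi -(sumR0 A); apply: sumR_ext => a.
by rewrite HPt (negbTE Hz) Rmult_0_r.
Qed.

(* The occupancy started from D_z is D^(pi) restricted to group z, divided by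
   p_z: the right-hand side solves the flow equation for D_z. *)
Lemma occ_Dz pi z : is_policy pi -> forall s,
  occ P gamma (Dz D z) pi s = if s.1 == z then occ P gamma D pi s / pz D z else 0.
Proof.
move=> Hpi.
have Hp := pz_pos z.
have HDz s : 0 <= Dz D z s.
  rewrite /Dz; case: ifP => _; last lra.
  by apply: Rmult_le_pos; [exact: HD.1 | apply: Rlt_le; exact: Rinv_0_lt_compat].
apply: (flow_unique HP Hg Hpi (occ_flow HP Hg Hpi HDz)) => s'.
set d := occ P gamma D pi.
have Hrestrict : sumR (fun s => (if s.1 == z then d s / pz D z else 0) * Ppi P pi s s') =
    if s'.1 == z then sumR (fun s => d s * Ppi P pi s s') / pz D z else 0.
  case: ifP => Hs'.
    rewrite /Rdiv -sumR_scalr; apply: sumR_ext => s.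
    case: ifP => Hs; first ring.
    by rewrite Ppi_cross_group ?Rmult_0_r ?Rmult_0_l //; move/eqP: Hs' => ->; rewrite Hs.
  rewrite -[RHS](sumR0 (S St)); apply: sumR_ext => s.
  case: ifP => Hs; last ring.
  by rewrite Ppi_cross_group ?Rmult_0_r //; move/eqP: Hs => ->; rewrite eq_sym Hs'.
rewrite Hrestrict /Dz; case: ifP => _; last ring.
by rewrite /d (occ_flow HP Hg Hpi HD.1 s'); field; lra.
Qed.

Lemma rhoz_Lambda pi z : is_policy pi ->
  rhoz P gamma D rho pi z = / pz D z *
    sumR (fun st => sumR (fun a => Lambda P gamma D pi (z, st) a * rho (z, st) a)).
Proof.
move=> Hpi; rewrite /rhoz.
transitivity (sumR (fun s => sumR (fun a =>
   if s.1 == z then / pz D z * (Lambda P gamma D pi s a * rho s a) else 0))).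
  apply: sumR_ext => s; apply: sumR_ext => a.
  by rewrite occ_Dz // /Lambda; case: ifP => _; [rewrite /Rdiv; ring | ring].
rewrite sumR_pair sumR_bool; case: z => /=; rewrite !sumR0 ?Rplus_0_r ?Rplus_0_l -sumR_scal;
  by apply: sumR_ext => st; exact: sumR_scal.
Qed.

Lemma LP_feasible_Lambda pi : in_PiDP P gamma D rho pi ->
  LP_feasible P gamma D rho (Lambda P gamma D pi) (rhoz P gamma D rho pi maj).
Proof.
move=> [Hpi Hdp]; split; [|split].
- move=> s a; apply: Rmult_le_pos; first exact: (occ_ge0 HP Hg Hpi HD.1).
  exact: (Hpi s).1.
- exact: Lambda_flow.
- by case; rewrite -rhoz_Lambda // Hdp.
Qed.

Lemma induced_policy_fair lam c pi : LP_feasible P gamma D rho lam c ->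
  induced_policy lam pi ->
  (forall s a, Lambda P gamma D pi s a = lam s a) /\ in_PiDP P gamma D rho pi.
Proof.
move=> [Hnn [Hflow Hfair]] Hind.
have HL := Lambda_induced Hnn Hflow Hind.
have Hpi := Hind.1.
have Hrho z : rhoz P gamma D rho pi z = c.
  rewrite rhoz_Lambda // -(Hfair z); congr (_ * _).
  by apply: sumR_ext => st; apply: sumR_ext => a; rewrite HL.
by split=> //; split=> //; rewrite /demographic_parity !Hrho.
Qed.

(* An optimal LP point induces an optimal fair policy with the same value:
   every fair policy pi' gives the feasible point Lambda^(pi'). *)
Lemma LP_optimal_policy lam c pi : LP_optimal P gamma D Rw rho lam c ->
  induced_policy lam pi ->
  optimal_P P gamma D Rw rho pi /\ Rpi P gamma D Rw pi = LP_obj gamma Rw lam.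
Proof.
move=> [Hf Hmax] Hind.
have [HL Hfair] := induced_policy_fair Hf Hind.
have Hval := Rpi_LP_obj HL.
split=> //; split=> // pi' Hpi'.
rewrite Hval (Rpi_LP_obj (lam := Lambda P gamma D pi')) //.
exact: Hmax _ _ (LP_feasible_Lambda Hpi').
Qed.

End PolicyLP.

Section PolyhedronMaximum.
Local Open Scope ring_scope.
Local Open Scope R_scope.
Variables (T J : finType) (C : J -> T -> R) (b : J -> R).

Definition std_feasible (x : T -> R) : Prop :=
  (forall i, 0 <= x i) /\ forall j, sumR (fun i => C j i * x i) = b j.

Definition row_coords (v : 'rV[R]_#|T|) (i : T) : R := v ord0 (enum_rank i).

Lemma row_coordsK (x : T -> R) : row_coords (\row_k x (enum_val k)) = x.
Proof. by apply: funext => i; rewrite /row_coords mxE enum_rankK. Qed.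

Lemma linear_form_continuous (c : T -> R) :
  continuous (fun v : 'rV[R]_#|T| => sumR (fun i => c i * row_coords v i)).
Proof.
rewrite /sumR /row_coords; elim: (index_enum T) => [|x r IH].
  rewrite (_ : (fun _ => _) = fun _ => 0); first exact: cst_continuous.
  by apply: funext => v; rewrite big_nil.
rewrite (_ : (fun _ => _) = fun v : 'rV[R]_#|T| => c x * v ord0 (enum_rank x) +
    \big[Rplus/0]_(i <- r) (c i * v ord0 (enum_rank i))); last first.
  by apply: funext => v; rewrite big_cons.
move=> v.
have Hterm : {for v, continuous (fun v : 'rV[R]_#|T| => (c x * v ord0 (enum_rank x) : R^o))}.
  apply: (@continuousM R _ (fun=> c x) (fun v : 'rV[R]_#|T| => v ord0 (enum_rank x))).
    exact: cst_continuous.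
  exact: coord_continuous.
exact: (@continuousD R R^o _ (fun v : 'rV[R]_#|T| => (c x * v ord0 (enum_rank x) : R^o))
   (fun v : 'rV[R]_#|T| => \big[Rplus/0]_(i <- r) (c i * v ord0 (enum_rank i))) v Hterm (IH v)).
Qed.

Definition feasible_rows : set 'rV[R]_#|T| := [set v | std_feasible (row_coords v)]%classic.

Lemma feasible_rows_closed : closed feasible_rows.
Proof.
have -> : feasible_rows =
    ((\bigcap_(i in [set: T]) [set v | (0 <= row_coords v i)%R]) `&`
     (\bigcap_(j in [set: J]) [set v | sumR (fun i => C j i * row_coords v i) = b j]))%classic.
  apply/seteqP; split => v /=.
    by move=> [H1 H2]; split => [i _ | j _] /=; [exact: H1 | exact: H2].
  by move=> [H1 H2]; split => [i | j]; [exact: (H1 i Logic.I) | exact: (H2 j Logic.I)].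
apply: closedI; apply: closed_bigI.
  move=> i _; apply: (preimage_closed (f := fun v : 'rV[R]_#|T| => v ord0 (enum_rank i))
                                      (D := [set x : R | 0 <= x]%classic)).
    by move=> v _; exact: coord_continuous.
  rewrite (_ : [set x : R | 0 <= x]%classic = [set x : R | (Order.le 0 x)]%classic).
    exact: closed_ge.
  by apply/seteqP; split => x /= /RleP.
move=> j _; apply: (preimage_closed (D := [set x : R | x = b j]%classic)).
  by move=> v _; exact: linear_form_continuous.
exact: closed_eq.
Qed.

(* A bounded polyhedron is compact: it is closed inside the box [0, M]^T. *)
Lemma feasible_rows_compact (M : R) :
  (forall x, std_feasible x -> forall i, x i <= M) -> compact.compact feasible_rows.
Proof.
move=> HM; apply: (subclosed_compact feasible_rows_closed
   (B := [set v : 'rV[R]_#|T| | forall k, (`[0%R, M]%classic : set R) (v ord0 k)]%classic)).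
  by apply: (@rV_compact _ _ (fun=> `[0%R, M]%classic)) => k; exact: segment_compact.
move=> v [H1 H2] k; have := HM (row_coords v) (conj H1 H2) (enum_val k).
have := H1 (enum_val k); rewrite /row_coords enum_valK => Hlo Hhi /=.
by rewrite in_itv /=; apply/andP; split; apply/RleP.
Qed.

Lemma polyhedron_max (w : T -> R) (M : R) :
  (exists x, std_feasible x) -> (forall x, std_feasible x -> forall i, x i <= M) ->
  exists x, std_feasible x /\
    forall y, std_feasible y -> sumR (fun i => w i * y i) <= sumR (fun i => w i * x i).
Proof.
move=> [x0 Hx0] HM.
have Fne : (feasible_rows !=set0)%classic.
  by exists (\row_k x0 (enum_val k)); rewrite /feasible_rows /= row_coordsK.
have [v Hv Hmax] := EVT_max_rV Fne (feasible_rows_compact HM)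
   (continuous_subspaceT (A := feasible_rows) (linear_form_continuous (c := w))).
exists (row_coords v); split=> [|y Hy]; first by move: Hv; rewrite in_setE.
have Hin : \row_k y (enum_val k) \in feasible_rows.
  by rewrite in_setE /feasible_rows /= row_coordsK.
by move: (Hmax _ Hin) => /RleP; rewrite row_coordsK.
Qed.

End PolyhedronMaximum.

(* The LP in standard form: the variable is lam viewed on S x A, the rows are
   the flow constraints (indexed by Some s') and the equality of the two
   group-normalised fairness functionals (indexed by None). *)
Section StandardForm.
Variables (St A : finType) (D : S St -> R) (P : S St -> A -> S St -> R)
  (Rw : S St -> A -> R) (gamma : R) (rho : S St -> A -> R).

Definition lp_matrix (j : option (S St)) (p : S St * A) : R :=
  match j with
  | Some s' => (if p.1 == s' then 1 else 0) - gamma * P p.1 p.2 s'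
  | None => (if p.1.1 then / pz D maj else - / pz D min) * rho p.1 p.2
  end.

Definition lp_rhs (j : option (S St)) : R :=
  match j with Some s' => (1 - gamma) * D s' | None => 0 end.

Definition lp_cost (p : S St * A) : R := / (1 - gamma) * Rw p.1 p.2.

Lemma lp_flow_row (lam : S St -> A -> R) s' :
  sumR (fun p => lp_matrix (Some s') p * lam p.1 p.2) =
  sumR (fun a => lam s' a) - gamma * sumR (fun s => sumR (fun a => lam s a * P s a s')).
Proof.
rewrite sumR_pair /=.
transitivity (sumR (fun s => (if s == s' then 1 else 0) * sumR (fun a => lam s a)) +
   - gamma * sumR (fun s => sumR (fun a => lam s a * P s a s'))).
  rewrite -sumR_scal -sumR_plus; apply: sumR_ext => s.
  rewrite -sumR_scal -sumR_scal -sumR_plus; apply: sumR_ext => a.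
  by case: (eqVneq s s') => [->|ne]; rewrite ?eqxx ?(negbTE ne); ring.
by rewrite sumR_indicator /Rminus Ropp_mult_distr_l.
Qed.

Lemma lp_fairness_row (lam : S St -> A -> R) :
  sumR (fun p => lp_matrix None p * lam p.1 p.2) =
  / pz D maj * sumR (fun st => sumR (fun a => lam (maj, st) a * rho (maj, st) a)) -
  / pz D min * sumR (fun st => sumR (fun a => lam (min, st) a * rho (min, st) a)).
Proof.
rewrite sumR_pair sumR_pair sumR_bool /= /maj /min /Rminus Ropp_mult_distr_l -!sumR_scal.
by congr (_ + _); apply: sumR_ext => st; rewrite -sumR_scal; apply: sumR_ext => a; ring.
Qed.

(* Feasibility of (lam, c) for some c is standard-form feasibility of lam;
   the common value c is recovered from the majority group. *)
Lemma LP_feasible_std (lam : S St -> A -> R) :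
  (exists c, LP_feasible P gamma D rho lam c) <->
  std_feasible lp_matrix lp_rhs (fun p => lam p.1 p.2).
Proof.
split.
- move=> [c [Hnn [Hflow Hfair]]]; split=> [p|[s'|]] /=; first exact: Hnn.
    by rewrite lp_flow_row Hflow; ring.
  by rewrite lp_fairness_row (Hfair maj) (Hfair min); ring.
- move=> [Hnn Hrow].
  exists (/ pz D maj * sumR (fun st => sumR (fun a => lam (maj, st) a * rho (maj, st) a))).
  split; [|split].
  + by move=> s a; exact: (Hnn (s, a)).
  + by move=> s'; have := Hrow (Some s'); rewrite lp_flow_row /=; lra.
  + by have := Hrow None; rewrite lp_fairness_row /= => H; case; rewrite /maj /min in H *; lra.
Qed.

Lemma LP_obj_std (lam : S St -> A -> R) :
  LP_obj gamma Rw lam = sumR (fun p => lp_cost p * lam p.1 p.2).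
Proof.
rewrite /LP_obj [RHS]sumR_pair -sumR_scal; apply: sumR_ext => s.
by rewrite -sumR_scal; apply: sumR_ext => a; rewrite /lp_cost /=; ring.
Qed.

Hypothesis HD : is_distr D.
Hypothesis HP : is_kernel P.
Hypothesis Hg : 0 < gamma < 1.

(* A feasible LP has an optimal solution: its feasible set is a polyhedron
   bounded by 1 (LP_feasible_le1), so polyhedron_max applies. *)
Lemma LP_optimum_exists : (exists lam c, LP_feasible P gamma D rho lam c) ->
  exists lam c, LP_optimal P gamma D Rw rho lam c.
Proof.
move=> [lam0 [c0 Hf0]].
have Hcurry x : std_feasible lp_matrix lp_rhs x ->
    exists c, LP_feasible P gamma D rho (fun s a => x (s, a)) c.
  by move=> Hx; apply/LP_feasible_std; rewrite (_ : (fun p => _) = x) //; apply: funext => -[].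
have Hbound x : std_feasible lp_matrix lp_rhs x -> forall i, x i <= 1.
  move=> Hx [s a]; have [c Hc] := Hcurry x Hx; exact: (LP_feasible_le1 HD HP Hg Hc).
have [x [Hx Hmax]] := polyhedron_max lp_cost
  (ex_intro _ _ ((LP_feasible_std lam0).1 (ex_intro _ c0 Hf0))) Hbound.
have [c Hc] := Hcurry x Hx.
exists (fun s a => x (s, a)), c; split=> // lam' c' Hf'.
rewrite !LP_obj_std; apply: Rle_trans (Hmax _ ((LP_feasible_std lam').1 (ex_intro _ c' Hf'))) _.
by apply: Req_le; apply: sumR_ext => -[].
Qed.

End StandardForm.

Theorem theorem3 (St A : finType) (D : S St -> R) (P : S St -> A -> S St -> R)
  (Rw : S St -> A -> R) (gamma : R) (rho : S St -> A -> R)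
  (HSt : inhabited St) (HA : inhabited A)
  (HD : is_distr D) (HP : is_kernel P) (Hgamma : 0 < gamma < 1)
  (Hsep : separable P)
  (Hpmaj : 0 < pz D maj) (Hpmin : 0 < pz D min) :
  ((exists lam c, LP_feasible P gamma D rho lam c) <->
   (exists pi, in_PiDP P gamma D rho pi)) /\
  ((exists pi, in_PiDP P gamma D rho pi) ->
   (exists lam c, LP_optimal P gamma D Rw rho lam c) /\
   forall lam c, LP_optimal P gamma D Rw rho lam c ->
     forall pi, induced_policy lam pi ->
       optimal_P P gamma D Rw rho pi /\
       Rpi P gamma D Rw pi = LP_obj gamma Rw lam).
Proof.
have Hfeasible_iff : (exists lam c, LP_feasible P gamma D rho lam c) <->
    (exists pi, in_PiDP P gamma D rho pi).
  split=> [[lam [c Hf]] | [pi Hpi]].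
    have [pi Hind] := induced_policy_exists HA Hf.1.
    by exists pi; exact: (induced_policy_fair HD HP Hgamma Hsep Hpmaj Hpmin Hf Hind).2.
  by do 2 eexists; exact: (LP_feasible_Lambda HD HP Hgamma Hsep Hpmaj Hpmin Hpi).
split=> // /Hfeasible_iff Hfeasible; split.
  exact: (LP_optimum_exists Rw HD HP Hgamma Hfeasible).
by move=> lam c Hopt pi; exact: (LP_optimal_policy HD HP Hgamma Hsep Hpmaj Hpmin Hopt).
Qed.
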